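(* Let $\mathcal{A}=\{\alpha_1<\dots<\alpha_m\}\subset(0,1)$. If the base forecasts are point forecasts, $b_t=[k_t,\dots,k_t]$ for some $k_t\in\mathbb{R}$, and $|y_t-k_t|\le R$ for all $t$, then the MultiQT iterates (learning rate $\eta>0$, initial hidden offset $\tilde\theta_1\in\mathcal{K}$) satisfy $\|\theta_t-\tilde\theta_t\|_2\le\frac{\eta|\mathcal{A}|^{3/2}}{\sqrt3}$ for all $t$.
   Context: $\mathcal{K}=\{x\in\mathbb{R}^m:x_1\le\dots\le x_m\}$; $\Pi_C$ Euclidean projection; $C-v=\{x-v:x\in C\}$. MultiQT: for $t=1,2,\dots$, played offset $\theta_t=\Pi_{\mathcal{K}-b_t}(\tilde\theta_t)$, forecast $q_t=b_t+\theta_t$, $\mathrm{cov}_t^{\alpha}=\mathbb{1}\{y_t\le q_t^{\alpha}\}$, hidden update $\tilde\theta_{t+1}^{\alpha}=\tilde\theta_t^{\alpha}-\eta(\mathrm{cov}_t^{\alpha}-\alpha)$. *)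

From mathcomp Require Import all_boot all_order all_algebra.
From mathcomp Require Import reals.
Set Implicit Arguments. Unset Strict Implicit. Unset Printing Implicit Defensive.
Import Order.TTheory GRing.Theory Num.Theory.
Local Open Scope ring_scope.

Section MultiQT.
Variable R : realType.

Definition isoK (m : nat) (x : 'I_m -> R) : Prop :=
  forall i j : 'I_m, (i <= j)%N -> x i <= x j.

Definition isoK_shift (m : nat) (v : 'I_m -> R) (x : 'I_m -> R) : Prop :=
  isoK (fun i => x i + v i).

Definition norm2 (m : nat) (x : 'I_m -> R) : R :=
  Num.sqrt (\sum_(i < m) x i ^+ 2).

Definition is_proj (m : nat) (C : ('I_m -> R) -> Prop) (z p : 'I_m -> R) : Prop :=
  C p /\ forall x, C x -> norm2 (fun i => z i - p i) <= norm2 (fun i => z i - x i).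

End MultiQT.

From mathcomp Require Import all_boot all_order all_algebra.
From mathcomp Require Import reals.
From mathcomp Require Import ring lra.
Import Order.TTheory GRing.Theory Num.Theory.
Local Open Scope ring_scope.
Set Implicit Arguments. Unset Strict Implicit.

(* When the base forecast is constant across quantile levels, K - b_t = K and
   the MultiQT update preserves the invariant "every step θ̃(i+1) - θ̃(i) of
   the hidden offset is at least -η".  Indeed, the covered indicators of two
   adjacent levels can differ only if the projection θ jumps between them, and
   at a jump of the isotonic projection the projected point itself is already
   increasing; otherwise the step only gains η(α_(i+1) - α_i) >= 0.  By the
   invariant, θ̃ + η (0, 1, ..., m-1) lies in K, so the projection is at
   distance at most η (Σ_(i<m) i²)^(1/2) <= η m^(3/2) / √3 from θ̃. *)

Section IsotonicProjection.
Variables (R : realType) (m : nat).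
Implicit Types (a d x z p : 'I_m -> R).

Lemma eq_norm2 (f g : 'I_m -> R) :
  (forall i, f i ^+ 2 = g i ^+ 2) -> norm2 f = norm2 g.
Proof. by move=> fg; rewrite /norm2; congr Num.sqrt; apply: eq_bigr. Qed.

Lemma ler_norm2 (f g : 'I_m -> R) :
  (norm2 f <= norm2 g) = (\sum_i f i ^+ 2 <= \sum_i g i ^+ 2).
Proof. by rewrite ler_sqrt // sumr_ge0 // => i _; rewrite sqr_ge0. Qed.

Lemma sum_sqrB_scale a d (e : R) :
  \sum_i (a i - e * d i) ^+ 2 =
  \sum_i a i ^+ 2 - 2 * e * \sum_i a i * d i + e ^+ 2 * \sum_i d i ^+ 2.
Proof.
rewrite !mulr_sumr -sumrN -!big_split /=.
by apply: eq_bigr => i _; ring.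
Qed.

Lemma is_proj_dir (C : ('I_m -> R) -> Prop) z p d :
  is_proj C z p -> (forall e, 0 < e <= 1 -> C (fun i => p i + e * d i)) ->
  \sum_i (z i - p i) * d i <= 0.
Proof.
move=> [_ p_min] Cd; set a := fun i => z i - p i.
set s := \sum_i a i * d i; set N := \sum_i d i ^+ 2.
have N_ge0 : 0 <= N by apply: sumr_ge0 => i _; rewrite sqr_ge0.
rewrite leNgt; apply/negP => s_gt0.
set e := Num.min 1 (s / (N + 1)).
have e_gt0 : 0 < e by rewrite lt_min ltr01 divr_gt0 //; lra.
have e_le1 : e <= 1 by rewrite ge_min lexx.
have eN_lt_s : e * N < s.
  have : e * (N + 1) <= s by rewrite -ler_pdivlMr ?ge_min ?lexx ?orbT //; lra.
  nra.
have /p_min : C (fun i => p i + e * d i) by apply: Cd; rewrite e_gt0 e_le1.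
rewrite ler_norm2.
have -> : \sum_i (z i - (p i + e * d i)) ^+ 2 = \sum_i (a i - e * d i) ^+ 2.
  by apply: eq_bigr => i _; rewrite /a opprD addrA.
rewrite sum_sqrB_scale -/s -/N expr2; nra.
Qed.

Lemma isoK_shift_const (v : 'I_m -> R) (c : R) x :
  (forall i, v i = c) -> isoK_shift v x <-> isoK x.
Proof.
by move=> vc; rewrite /isoK_shift /isoK; split=> x_iso i j ij;
  have := x_iso i j ij; rewrite !vc ?lerD2r.
Qed.

Lemma is_proj_isoK_shift_const (v : 'I_m -> R) (c : R) z p :
  (forall i, v i = c) -> is_proj (isoK_shift v) z p -> is_proj (@isoK R m) z p.
Proof.
move=> vc [Kp p_min]; split=> [|x Kx]; first exact/(isoK_shift_const _ vc).
exact/p_min/(isoK_shift_const _ vc).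
Qed.

Definition prefix_sum a (l : nat) : R := \sum_(i < m | (i < l)%N) a i.

Lemma prefix_sumS a (j : 'I_m) : prefix_sum a j.+1 = prefix_sum a j + a j.
Proof.
rewrite /prefix_sum (bigD1 j) //= addrC; congr (_ + _).
apply: eq_bigl => i; rewrite ltnS leq_eqVlt val_eqE.
by case: eqVneq => [->|_]; rewrite ?ltnn ?andbF ?andbT.
Qed.

Lemma sum_mul_prefix a (c : R) (l : nat) :
  \sum_i a i * (if (i < l)%N then c else 0) = c * prefix_sum a l.
Proof.
rewrite /prefix_sum mulr_sumr [RHS]big_mkcond; apply: eq_bigr => i _.
by case: ifP; rewrite ?mulr0 // mulrC.
Qed.

Lemma isoK_proj_prefix_ge0 z p (l : nat) :
  is_proj (@isoK R m) z p -> 0 <= prefix_sum (fun i => z i - p i) l.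
Proof.
move=> proj; rewrite -oppr_le0 -mulN1r -sum_mul_prefix.
apply: (is_proj_dir proj) => e /andP[e_gt0 _] i j ij.
have := proj.1 i j ij.
by case: (ltnP j l) => [/(leq_ltn_trans ij)->|_]; [|case: ifP => _]; lra.
Qed.

Lemma isoK_proj_prefix_le0 z p (i0 j0 : 'I_m) :
  is_proj (@isoK R m) z p -> val j0 = (val i0).+1 -> p i0 < p j0 ->
  prefix_sum (fun i => z i - p i) j0 <= 0.
Proof.
move=> proj j0E gap; have Kp := proj.1.
have gap_gt0 : 0 < p j0 - p i0 by rewrite subr_gt0.
rewrite -(pmulr_rle0 _ gap_gt0) -sum_mul_prefix.
apply: (is_proj_dir proj) => e /andP[e_gt0 e_le1] i j ij.
have := Kp i j ij; case: (ltnP j j0) => [j_lt|j0_le_j].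
  by rewrite (leq_ltn_trans ij j_lt); lra.
case: (ltnP i j0) => [i_lt|_]; last lra.
have : p i <= p i0 by apply: Kp; rewrite -ltnS -j0E.
have : p j0 <= p j by apply: Kp.
nra.
Qed.

(* In fact z i <= p i < p j <= z j, read off from the signs of the prefix
   sums of z - p up to i, i + 1 and i + 2. *)
Lemma isoK_proj_jump z p (i j : 'I_m) :
  is_proj (@isoK R m) z p -> val j = (val i).+1 -> p i < p j -> z i <= z j.
Proof.
move=> proj jE gap.
have S_i := isoK_proj_prefix_ge0 i proj.
have S_j := isoK_proj_prefix_le0 proj jE gap.
have S_jS := isoK_proj_prefix_ge0 j.+1 proj.
have := prefix_sumS (fun i => z i - p i) i; rewrite -jE.
have := prefix_sumS (fun i => z i - p i) j.
lra.
Qed.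

End IsotonicProjection.

Section HiddenOffsetSteps.
Variables (R : realType) (m : nat).
Implicit Types (x z p : 'I_m -> R).

Definition steps_ge (c : R) x :=
  forall i j : 'I_m, val j = (val i).+1 -> c <= x j - x i.

Lemma isoK_steps_ge (c : R) x : isoK x -> c <= 0 -> steps_ge c x.
Proof.
move=> Kx c_le0 i j jE; have := Kx i j; rewrite jE => /(_ (leqnSn _)); lra.
Qed.

Lemma isoK_add_ramp (c : R) x :
  steps_ge (- c) x -> isoK (fun i => x i + c * (val i)%:R).
Proof.
move=> steps i j /subnKC; move: (j - i)%N => n.
elim: n j => [|n IH] j jE.
  by rewrite (_ : j = i) //; apply: val_inj => /=; rewrite -jE addn0.
have k_lt : (i + n < m)%N by rewrite -addnS jE ltnW.
have := IH (Ordinal k_lt) erefl; have := steps (Ordinal k_lt) j.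
by rewrite /= -jE addnS -natr1 => /(_ erefl); lra.
Qed.

Lemma steps_ge_update (alpha : 'I_m -> R) (eta y k : R) z p z' :
  (forall i j : 'I_m, (i < j)%N -> alpha i <= alpha j) -> 0 <= eta ->
  is_proj (@isoK R m) z p -> steps_ge (- eta) z ->
  (forall i, z' i = z i - eta * ((if y <= k + p i then 1 else 0) - alpha i)) ->
  steps_ge (- eta) z'.
Proof.
move=> alpha_le eta_ge0 proj steps z'E i j jE; rewrite !z'E.
have ij : (i < j)%N by rewrite jE.
have eta_alpha : eta * alpha i <= eta * alpha j by rewrite ler_wpM2l ?alpha_le.
have := steps i j jE; have := proj.1 i j (ltnW ij).
rewrite le_eqVlt => /predU1P[<-|gap].
  by case: ifP => _; lra.
have := isoK_proj_jump proj jE gap.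
by case: ifP => _; case: ifP => _; lra.
Qed.

Lemma sum_sqr_ord_le : (3 * \sum_(i < m) i ^ 2 <= m ^ 3)%N.
Proof.
elim: m => [|n IH]; first by rewrite big_ord0.
have cubeS : (n.+1 ^ 3 = n ^ 3 + (3 * n ^ 2 + (3 * n + 1)))%N.
  by rewrite -addn1; ring.
by rewrite big_ord_recr /= mulnDr cubeS leq_add // leq_addr.
Qed.

Lemma norm2_ramp (c : R) : 0 <= c ->
  norm2 (fun i : 'I_m => c * (val i)%:R) <= c * (m%:R * Num.sqrt m%:R) / Num.sqrt 3.
Proof.
move=> c_ge0.
have sqrt3_gt0 : 0 < Num.sqrt (3 : R) by rewrite sqrtr_gt0 ltr0n.
have bound_ge0 : 0 <= c * (m%:R * Num.sqrt m%:R) / Num.sqrt 3.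
  by rewrite divr_ge0 ?mulr_ge0 ?sqrtr_ge0 ?ler0n // ltW.
rewrite -(ger0_norm bound_ge0) -sqrtr_sqr /norm2 ler_sqrt ?sqr_ge0 //.
have -> : \sum_(i < m) (c * (val i)%:R) ^+ 2 = c ^+ 2 * (\sum_(i < m) i ^ 2)%N%:R.
  by rewrite natr_sum mulr_sumr; apply: eq_bigr => i _; rewrite natrX exprMn.
rewrite expr_div_n !exprMn !sqr_sqrtr ?ler0n // -[X in _ <= X]mulrA.
rewrite ler_wpM2l ?sqr_ge0 // ler_pdivlMr ?ltr0n // mulrC -exprSr -natrX.
rewrite -natrM ler_nat.
exact: sum_sqr_ord_le.
Qed.

End HiddenOffsetSteps.

Theorem lemma3 (R : realType) (m : nat) (alpha : 'I_m -> R)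
  (Halpha_inc : forall i j : 'I_m, (i < j)%N -> alpha i < alpha j)
  (Halpha01 : forall i : 'I_m, 0 < alpha i /\ alpha i < 1)
  (eta : R) (Heta : 0 < eta)
  (k y : nat -> R) (Rb : R)
  (Hbound : forall t : nat, (0 < t)%N -> `|y t - k t| <= Rb)
  (b : nat -> 'I_m -> R) (Hb : forall (t : nat) (i : 'I_m), (0 < t)%N -> b t i = k t)
  (thtil theta : nat -> 'I_m -> R)
  (Hinit : isoK (thtil 1%N))
  (Hproj : forall t : nat, (0 < t)%N ->
      is_proj (isoK_shift (b t)) (thtil t) (theta t))
  (Hupd : forall (t : nat) (i : 'I_m), (0 < t)%N ->
      thtil t.+1 i = thtil t i
        - eta * ((if y t <= b t i + theta t i then 1 else 0) - alpha i)) :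
  forall t : nat, (0 < t)%N ->
    norm2 (fun i => theta t i - thtil t i)
      <= eta * (m%:R * Num.sqrt m%:R) / Num.sqrt 3.
Proof.
have projK t : (0 < t)%N -> is_proj (@isoK R m) (thtil t) (theta t).
  move=> t_gt0; exact: is_proj_isoK_shift_const (Hb t ^~ t_gt0) (Hproj t t_gt0).
have steps t : (0 < t)%N -> steps_ge (- eta) (thtil t).
  elim: t => [//|t IH _].
  have [->|t_gt0] := posnP t; first by apply: (isoK_steps_ge Hinit); lra.
  have alpha_le (i j : 'I_m) : (i < j)%N -> alpha i <= alpha j by move/Halpha_inc/ltW.
  apply: (steps_ge_update alpha_le (ltW Heta) (projK t t_gt0) (IH t_gt0)) => i.
  by rewrite Hupd // Hb.
move=> t t_gt0.
have dist_le := (projK t t_gt0).2 _ (isoK_add_ramp (steps t t_gt0)).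
rewrite (eq_norm2 (g := fun i => thtil t i - theta t i)) => [|i]; last first.
  by rewrite -sqrrN opprB.
apply: le_trans dist_le _.
rewrite (eq_norm2 (g := fun i => eta * (val i)%:R)) => [|i]; last first.
  by rewrite opprD addrA subrr add0r sqrrN.
exact/norm2_ramp/ltW.
Qed.
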